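(* Let $m,n\ge1$ and let $A\in\{0,1\}^{m\times n}$ have exactly three ones in each row. Let $x^0,\bar x^0\in\mathrm{NPadj}(A)$ be as defined in the context. Then $x^0$ and $\bar x^0$ are adjacent vertices of $\operatorname{conv}(\mathrm{NPadj}(A))$ if and only if $F_1=\emptyset$, equivalently if and only if $\mathrm{Part}(A)=\emptyset$.
   Context: **Definition of $\mathrm{NPadj}(A)$.** Let $m,n\ge1$ and let $A\in\{0,1\}^{m\times n}$ have exactly three ones in each row. Index the coordinates of $\mathbb{R}^{3n+3}$ by $y_1,y_2,y_3$ and by $x_j,\bar x_j,x'_j$ for $j\in[n]=\{1,\dots,n\}$. Then $\mathrm{NPadj}(A)$ is the set of vectors in $\{0,1\}^{3n+3}$ satisfying: - $x_j+\bar x_j=1$ for all $j\in[n]$; - $y_1+y_2+x'_j+\bar x_j=2$ for all $j\in[n]$; - for each row of $A$, with ones in columns $i<j<k$, the equation $y_3+x_i+x'_j+x'_k=2$. **Special points and sets.** - $x^0$ is the point with $y_1=y_2=y_3=0$, $x_j=0$ and $x'_j=\bar x_j=1$ for all $j\in[n]$. - $\bar x^0=\mathbf 1-x^0$. - $F_1=\{x\in\mathrm{NPadj}(A): y_1=0,y_2=1,y_3=1\}$. - $\mathrm{Part}(A)=\{z\in\{0,1\}^n: Az=\mathbf 1\}$. Two vertices are adjacent if their convex hull is an edge (1-dimensional face) of the polytope. *)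

From HB Require Import structures.
From mathcomp Require Import all_boot all_order all_algebra.
Set Implicit Arguments. Unset Strict Implicit. Unset Printing Implicit Defensive.
Import Order.TTheory GRing.Theory Num.Theory.

(* Coordinates of R^(3n+3): inl k = y_(k+1);
   inr (0,j) = x_j, inr (1,j) = xbar_j, inr (2,j) = x'_j. *)
Definition coord (n : nat) := ('I_3 + 'I_3 * 'I_n)%type.
Definition o0 : 'I_3 := @Ordinal 3 0 isT.
Definition o1 : 'I_3 := @Ordinal 3 1 isT.
Definition o2 : 'I_3 := @Ordinal 3 2 isT.
Definition Yc n (k : 'I_3) : coord n := inl k.
Definition Xc n (j : 'I_n) : coord n := inr (o0, j).
Definition XBc n (j : 'I_n) : coord n := inr (o1, j).
Definition XPc n (j : 'I_n) : coord n := inr (o2, j).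

Definition pt (n : nat) := {ffun coord n -> bool}.

Definition NPadj m n (A : 'M[nat]_(m, n)) : {set pt n} :=
  [set p : pt n |
    [forall j : 'I_n, nat_of_bool (p (Xc j)) + nat_of_bool (p (XBc j)) == 1]
 && [forall j : 'I_n, nat_of_bool (p (Yc n o0)) + nat_of_bool (p (Yc n o1))
                      + nat_of_bool (p (XPc j)) + nat_of_bool (p (XBc j)) == 2]
 && [forall r : 'I_m, forall i : 'I_n, forall j : 'I_n, forall k : 'I_n,
       [&& (i < j)%N, (j < k)%N, A r i == 1, A r j == 1 & A r k == 1] ==>
       (nat_of_bool (p (Yc n o2)) + nat_of_bool (p (Xc i))
        + nat_of_bool (p (XPc j)) + nat_of_bool (p (XPc k)) == 2)]].

Definition x0 n : pt n :=
  [ffun c : coord n => match c with inl _ => false | inr (t, _) => t != o0 end].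
Definition xbar0 n : pt n := [ffun c => ~~ x0 n c].

Definition F1 m n (A : 'M[nat]_(m, n)) : {set pt n} :=
  [set p in NPadj A | [&& ~~ p (Yc n o0), p (Yc n o1) & p (Yc n o2)]].

Definition Part m n (A : 'M[nat]_(m, n)) : {set {ffun 'I_n -> bool}} :=
  [set z : {ffun 'I_n -> bool} |
     [forall r : 'I_m, \sum_(j < n) A r j * nat_of_bool (z j) == 1]].

Local Open Scope ring_scope.

Definition emb (R : realFieldType) n (p : pt n) : coord n -> R :=
  fun c => (nat_of_bool (p c))%:R.
Arguments emb R {n} p c.

Definition conv (R : realFieldType) n (S : {set pt n}) (x : coord n -> R) : Prop :=
  exists l : pt n -> R,
    [/\ forall p, 0 <= l p,
        forall p, p \notin S -> l p = 0,
        \sum_p l p = 1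
      & forall c, x c = \sum_p l p * emb R p c].
Arguments conv R {n} S x.

Definition dot (R : realFieldType) n (w x : coord n -> R) : R :=
  \sum_(c : coord n) w c * x c.
Arguments dot {R n} w x.

Definition is_face (R : realFieldType) n (S : {set pt n}) (F : (coord n -> R) -> Prop) : Prop :=
  exists w : coord n -> R, forall x,
    F x <-> (conv R S x /\ forall y, conv R S y -> dot w y <= dot w x).
Arguments is_face R {n} S F.

Definition is_vertex (R : realFieldType) n (S : {set pt n}) (u : pt n) : Prop :=
  is_face R S (fun x => forall c, x c = emb R u c).
Arguments is_vertex R {n} S u.

(* u, v adjacent vertices: distinct vertices whose convex hull (a segment,
   hence 1-dimensional) is a face *)
Definition adjacent (R : realFieldType) n (S : {set pt n}) (u v : pt n) : Prop :=
  [/\ u != v, is_vertex R S u, is_vertex R S v & is_face R S (conv R [set u; v])].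
Arguments adjacent R {n} S u v.

From Pilot Require Import Defs.
From HB Require Import structures.
From mathcomp Require Import all_boot all_order all_algebra.
From mathcomp Require Import zify ring lra.
Set Implicit Arguments. Unset Strict Implicit. Unset Printing Implicit Defensive.
Import Order.TTheory GRing.Theory Num.Theory.

(* A point of NPadj(A) with y1 <> y2 has x' = x, and the row equations then say
   exactly that z_j := [x_j = y3] solves Az = 1; conversely every solution z
   gives such a point with (y1, y2, y3) = (0, 1, 1).  A point with y1 = y2 is
   forced to be x0 or its complement.  So if Part(A) is empty, NPadj(A) is just
   {x0, xbar0} and the segment is trivially an edge.  If instead p lies in F1,
   then p and its complement have the same midpoint (all coordinates 1/2) as x0
   and xbar0; a face containing the midpoint of two points of the polytope
   contains both, so p would lie on the segment, whose points all have
   y1 = y2. *)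

Lemma ord3_cases (k : 'I_3) : k = o0 \/ k = o1 \/ k = o2.
Proof.
case: k => [[|[|[|k]]] Hk] //.
- by left; apply/val_inj.
- by right; left; apply/val_inj.
- by right; right; apply/val_inj.
Qed.

Lemma pt_ext n (p q : pt n) :
  (forall k, p (Yc n k) = q (Yc n k)) -> (forall j, p (Xc j) = q (Xc j)) ->
  (forall j, p (XBc j) = q (XBc j)) -> (forall j, p (XPc j) = q (XPc j)) -> p = q.
Proof.
move=> HY HX HB HP; apply/ffunP => [[k|[t j]]]; first exact: HY.
by case: (ord3_cases t) => [->|[->|->]]; [apply: HX|apply: HB|apply: HP].
Qed.

Definition ptC n (p : pt n) : pt n := [ffun c => ~~ p c].

Lemma ptCK n : involutive (@ptC n).
Proof. by move=> p; apply/ffunP => c; rewrite !ffunE negbK. Qed.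

Lemma xbar0E n : xbar0 n = ptC (x0 n).
Proof. by []. Qed.

Lemma x0_neq_xbar0 n : x0 n != xbar0 n.
Proof. by apply/eqP => /ffunP /(_ (Yc n o0)); rewrite !ffunE. Qed.

Section NPadj.

Variables (m n : nat) (A : 'M[nat]_(m, n)).
Hypothesis A01 : forall i j, (A i j <= 1)%N.
Hypothesis A_row3 : forall i, (\sum_(j < n) A i j = 3)%N.

Lemma row_sum_support r (i j k : 'I_n) :
  (i < j < k)%N -> A r i = 1%N -> A r j = 1%N -> A r k = 1%N ->
  forall f : 'I_n -> nat, (\sum_l A r l * f l = f i + f j + f k)%N.
Proof.
move=> /andP [ij jk] Ai Aj Ak f.
have ji : j != i by rewrite neq_ltn ij orbT.
have ki : k != i by rewrite neq_ltn (ltn_trans ij jk) orbT.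
have kj : k != j by rewrite neq_ltn jk orbT.
have rest_eq0 l : (l != i) && (l != j) && (l != k) -> A r l = 0%N.
  move=> lijk; apply/eqP; move: (A_row3 r) lijk.
  rewrite (bigD1 i) // (bigD1 j) //= (bigD1 k) /=; last by rewrite ki kj.
  rewrite Ai Aj Ak => /eqP; rewrite !add1n !eqSS => /eqP /eqP.
  by rewrite sum_nat_eq0 => /forallP /(_ l) /implyP.
rewrite (bigD1 i) // (bigD1 j) //= (bigD1 k) /=; last by rewrite ki kj.
by rewrite big1 => [|l /rest_eq0 ->] //; rewrite Ai Aj Ak; lia.
Qed.

Lemma row_ones r :
  exists i j k : 'I_n, [/\ (i < j < k)%N, A r i = 1%N, A r j = 1%N & A r k = 1%N].
Proof.
pose S := [set l | A r l == 1%N].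
have cardS : #|S| = 3.
  rewrite -(A_row3 r) -sum1_card big_mkcond /=; apply: eq_bigr => l _.
  by rewrite inE; have := A01 r l; case: (A r l) => [|[|]].
have sortedS : sorted (fun x y : 'I_n => (x < y)%N) (enum S).
  apply: sorted_filter; first exact: ltn_trans.
  by have := iota_ltn_sorted 0 n; rewrite -val_enum_ord sorted_map enumT.
have inS x : x \in enum S -> A r x = 1%N by rewrite mem_enum inE => /eqP.
move: cardS sortedS inS; rewrite cardE; case: (enum S) => [|a [|b [|c [|]]]] //= _.
move=> /and3P [ab bc _] inS.
by exists a, b, c; split; rewrite ?ab ?inS // !inE eqxx ?orbT.
Qed.

Lemma NPadjP (p : pt n) : reflect
  [/\ forall j, (p (Xc j) + p (XBc j) = 1)%N,
      forall j, (p (Yc n o0) + p (Yc n o1) + p (XPc j) + p (XBc j) = 2)%N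
    & forall r (i j k : 'I_n), (i < j < k)%N -> A r i = 1%N -> A r j = 1%N -> A r k = 1%N ->
        (p (Yc n o2) + p (Xc i) + p (XPc j) + p (XPc k) = 2)%N]
  (p \in NPadj A).
Proof.
rewrite inE; apply: (iffP idP).
- move=> /andP [/andP [/forallP Hx /forallP Hy] /forallP Hr]; split.
  + by move=> j; apply/eqP.
  + by move=> j; apply/eqP.
  + move=> r i j k /andP [ij jk] Ai Aj Ak; apply/eqP.
    move: (Hr r) => /forallP /(_ i) /forallP /(_ j) /forallP /(_ k) /implyP; apply.
    by rewrite ij jk Ai Aj Ak.
- move=> [Hx Hy Hr]; apply/andP; split; first (apply/andP; split).
  + by apply/forallP => j; apply/eqP.
  + by apply/forallP => j; apply/eqP.
  + apply/forallP => r; apply/forallP => i; apply/forallP => j; apply/forallP => k.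
    apply/implyP => /and5P [ij jk /eqP Ai /eqP Aj /eqP Ak].
    by apply/eqP; apply: (Hr r); rewrite ?ij.
Qed.

Lemma x0_in_NPadj : x0 n \in NPadj A.
Proof. by apply/NPadjP; split=> *; rewrite !ffunE. Qed.

Lemma ptC_in_NPadj p : p \in NPadj A -> ptC p \in NPadj A.
Proof.
move=> /NPadjP [Hx Hy Hr]; apply/NPadjP; split=> [j|j|r i j k ijk Ai Aj Ak].
- by move: (Hx j); rewrite !ffunE; case: (p (Xc j)); case: (p (XBc j)).
- move: (Hy j); rewrite !ffunE.
  by case: (p (Yc n o0)); case: (p (Yc n o1)); case: (p (XPc j)); case: (p (XBc j)).
- move: (Hr r i j k ijk Ai Aj Ak); rewrite !ffunE.
  by case: (p (Yc n o2)); case: (p (Xc i)); case: (p (XPc j)); case: (p (XPc k)).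
Qed.

Lemma xbar0_in_NPadj : xbar0 n \in NPadj A.
Proof. exact: ptC_in_NPadj x0_in_NPadj. Qed.

Lemma NPadj_row p r : p \in NPadj A -> exists i j k : 'I_n,
  (forall f : 'I_n -> nat, \sum_l A r l * f l = f i + f j + f k)%N /\
  (p (Yc n o2) + p (Xc i) + p (XPc j) + p (XPc k) = 2)%N.
Proof.
move=> /NPadjP [_ _ Hr]; have [i [j [k [ijk Ai Aj Ak]]]] := row_ones r.
by exists i, j, k; split; [exact: row_sum_support | exact: Hr ijk Ai Aj Ak].
Qed.

Lemma NPadj_y01_false p : (0 < m)%N -> p \in NPadj A ->
  ~~ p (Yc n o0) -> ~~ p (Yc n o1) -> p = x0 n.
Proof.
move=> m0 pS /negbTE p0 /negbTE p1; have /NPadjP [Hx Hy _] := pS.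
have pB j : p (XBc j) by move: (Hy j); rewrite p0 p1; case: (p (XBc j)); case: (p (XPc j)).
have pP j : p (XPc j) by move: (Hy j); rewrite p0 p1; case: (p (XBc j)); case: (p (XPc j)).
have pX j : p (Xc j) = false by move: (Hx j); rewrite pB; case: (p (Xc j)).
have [i [j [k [_ Hr]]]] := NPadj_row (Ordinal m0) pS.
have p2 : p (Yc n o2) = false by move: Hr; rewrite pX !pP; case: (p (Yc n o2)).
apply: pt_ext => [k'|j'|j'|j']; rewrite ffunE ?pX ?pB ?pP //.
by case: (ord3_cases k') => [->|[->|->]].
Qed.

Lemma NPadj_y01_true p : (0 < m)%N -> p \in NPadj A ->
  p (Yc n o0) -> p (Yc n o1) -> p = xbar0 n.
Proof.
move=> m0 pS p0 p1; rewrite -[p]ptCK xbar0E; congr ptC.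
by apply: NPadj_y01_false; rewrite ?ptC_in_NPadj ?ffunE ?negbK.
Qed.

Lemma NPadj_Part p : p \in NPadj A -> p (Yc n o0) != p (Yc n o1) ->
  [ffun l => p (Xc l) == p (Yc n o2)] \in Part A.
Proof.
move=> pS p01; have /NPadjP [Hx Hy _] := pS.
have pP j : p (XPc j) = p (Xc j).
  move: (Hy j) (Hx j) p01.
  by case: (p (Yc n o0)); case: (p (Yc n o1)); case: (p (XBc j)); case: (p (XPc j)); case: (p (Xc j)).
rewrite inE; apply/forallP => r; have [i [j [k [-> Hr]]]] := NPadj_row r pS.
move: Hr; rewrite !pP !ffunE.
by case: (p (Yc n o2)); case: (p (Xc i)); case: (p (Xc j)); case: (p (Xc k)).
Qed.

Definition pt_of_part (z : {ffun 'I_n -> bool}) : pt n :=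
  [ffun c => match c with
             | inl k => k != o0
             | inr (t, j) => if t == o1 then ~~ z j else z j end].

Lemma pt_of_part_F1 z : z \in Part A -> pt_of_part z \in F1 A.
Proof.
rewrite inE => /forallP zP; rewrite inE !ffunE /= andbT.
apply/NPadjP; split=> [j|j|r i j k ijk Ai Aj Ak]; rewrite !ffunE /=; try by case: (z j).
move: (zP r); rewrite (row_sum_support ijk Ai Aj Ak (fun l => nat_of_bool (z l))).
by case: (z i); case: (z j); case: (z k).
Qed.

Lemma F1_eq0_Part : F1 A = set0 <-> Part A = set0.
Proof.
split=> [F10 | Part0]; apply/eqP/set0Pn => [[x]].
- by move/pt_of_part_F1; rewrite F10 inE.
- rewrite inE => /andP [pS /and3P [/negbTE p0 p1 _]].
  by have := NPadj_Part pS; rewrite p0 p1 Part0 inE => /(_ isT).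
Qed.

Lemma NPadj_pair : (0 < m)%N -> Part A = set0 -> NPadj A = [set x0 n; xbar0 n].
Proof.
move=> m0 Part0; apply/setP => p; rewrite in_set2.
apply/idP/idP => [pS | /orP [] /eqP ->]; rewrite ?x0_in_NPadj ?xbar0_in_NPadj //.
case: (eqVneq (p (Yc n o0)) (p (Yc n o1))) => [p01 | /(NPadj_Part pS)]; last by rewrite Part0 inE.
case p0: (p (Yc n o0)); move: p01; rewrite p0 => /esym p1.
- by rewrite (NPadj_y01_true m0 pS) ?p0 ?p1 ?eqxx ?orbT.
- by rewrite (NPadj_y01_false m0 pS) ?p0 ?p1 ?eqxx.
Qed.

End NPadj.

Local Open Scope ring_scope.

Section Segments.

Variables (R : realFieldType) (n : nat).

Lemma conv_pt (S : {set pt n}) p : p \in S -> conv R S (emb R p).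
Proof.
move=> pS; exists (fun q => (q == p)%:R); split.
- by move=> q; rewrite ler0n.
- by move=> q qS; case: eqP => // E; rewrite E pS in qS.
- by rewrite (bigD1 p) //= eqxx big1 ?addr0 // => q /negbTE ->.
- move=> c; rewrite (bigD1 p) //= eqxx mul1r big1 ?addr0 // => q /negbTE ->.
  by rewrite mul0r.
Qed.

Lemma emb_ptC (p : pt n) c : emb R p c + emb R (ptC p) c = 1.
Proof. by rewrite /emb ffunE; case: (p c); rewrite /= ?addr0 ?add0r. Qed.

Lemma face_midpoint (S : {set pt n}) (F : (Defs.coord n -> R) -> Prop) (p q : pt n) h :
  is_face R S F -> p \in S -> q \in S ->
  (forall c, emb R p c + emb R q c = 2 * h c) -> F h -> F (emb R p).
Proof.
move=> [w Fw] pS qS pqh /Fw [_ hmax].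
have Hp := hmax _ (conv_pt pS); have Hq := hmax _ (conv_pt qS).
have Hsum : dot w (emb R p) + dot w (emb R q) = 2 * dot w h.
  rewrite /dot -big_split mulr_sumr; apply: eq_bigr => c _ /=.
  by rewrite -mulrDr pqh mulrCA.
apply/Fw; split; first exact: conv_pt.
by move=> y /hmax; lra.
Qed.

Lemma big_pair_support (u v : pt n) (l f : pt n -> R) :
  u != v -> (forall p, p \notin [set u; v] -> l p = 0) ->
  \sum_p l p * f p = l u * f u + l v * f v.
Proof.
move=> uv lS; rewrite (bigD1 u) //= (bigD1 v) /=; last by rewrite eq_sym.
rewrite big1 ?addr0 // => p /andP [pu pv].
by rewrite lS ?mul0r // !inE negb_or pu pv.
Qed.

Lemma conv_pairP (u v : pt n) x : u != v ->
  conv R [set u; v] x <->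
  exists2 a, 0 <= a <= 1 & forall c, x c = (1 - a) * emb R u c + a * emb R v c.
Proof.
move=> uv; have sumE (l : pt n -> R) :
    (forall p, p \notin [set u; v] -> l p = 0) -> \sum_p l p = l u + l v.
  by move=> lS; rewrite -(eq_bigr _ (fun p _ => mulr1 (l p))) (big_pair_support _ uv lS) !mulr1.
split=> [[l [l0 lS l1 lx]] | [a /andP [a0 a1] xE]].
- have lu : l u = 1 - l v by move: l1; rewrite sumE //; lra.
  exists (l v); first by rewrite l0 -subr_ge0 -lu l0.
  by move=> c; rewrite lx (big_pair_support _ uv lS) lu.
- pose l p := if p == u then 1 - a else if p == v then a else 0.
  have lS p : p \notin [set u; v] -> l p = 0.
    by rewrite !inE negb_or /l => /andP [/negbTE -> /negbTE ->].
  have [lu lv] : l u = 1 - a /\ l v = a by rewrite /l eqxx eq_sym (negbTE uv) eqxx.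
  exists l; split=> //.
  + by move=> p; rewrite /l; case: ifP => _; [lra | case: ifP => _; lra].
  + by rewrite sumE // lu lv; lra.
  + by move=> c; rewrite xE (big_pair_support _ uv lS) lu lv.
Qed.

Lemma vertex_pair (u v : pt n) : u != v -> is_vertex R [set u; v] u.
Proof.
move=> uv; have [c0 uv0] : exists c0, u c0 != v c0.
  apply/existsP; apply: contraNT uv => /existsPn uv_eq.
  by apply/eqP/ffunP => c; apply/eqP; rewrite -[_ == _]negbK uv_eq.
pose s := emb R u c0 - emb R v c0.
have s2 : s ^+ 2 = 1.
  by rewrite /s /emb; move: uv0; case: (u c0); case: (v c0); rewrite //= ?subr0 ?sub0r ?sqrrN expr1n.
pose w c : R := if c == c0 then s else 0.
have dot_seg a x : (forall c, x c = (1 - a) * emb R u c + a * emb R v c) ->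
    dot w x = s * emb R u c0 - a.
  move=> xE; rewrite /dot (bigD1 c0) //= /w eqxx big1 => [|c /negbTE ->]; last first.
    by rewrite mul0r.
  rewrite addr0 xE; transitivity (s * emb R u c0 - a * s ^+ 2); first by rewrite /s; ring.
  by rewrite s2 mulr1.
have uE c : emb R u c = (1 - 0) * emb R u c + 0 * emb R v c by rewrite subr0 mul1r mul0r addr0.
exists w => x; split=> [xu | [/(conv_pairP _ uv) [a /andP [a0 a1] xE] xmax] c].
- have xE c : x c = (1 - 0) * emb R u c + 0 * emb R v c by rewrite xu; apply: uE.
  split=> [|y /(conv_pairP _ uv) [b /andP [b0 _] yE]].
    by apply/(conv_pairP _ uv); exists 0; rewrite ?lexx ?ler01.
  by rewrite (dot_seg _ _ yE) (dot_seg _ _ xE); lra.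
- have := xmax _ (conv_pt (setU11 u [set v])).
  rewrite (dot_seg _ _ uE) (dot_seg _ _ xE) => ua.
  have a_eq0 : a = 0 by lra.
  by rewrite xE a_eq0 -uE.
Qed.

Lemma adjacent_pair (u v : pt n) : u != v -> adjacent R [set u; v] u v.
Proof.
move=> uv; split=> //; first exact: vertex_pair.
  by rewrite setUC; apply: vertex_pair; rewrite eq_sym.
exists (fun _ => 0) => x; split=> [xS | []] //.
by split=> // y _; rewrite /dot !big1 // => c _; rewrite mul0r.
Qed.

End Segments.

Lemma adjacent_F1 (R : realFieldType) m n (A : 'M[nat]_(m, n)) :
  adjacent R (NPadj A) (x0 n) (xbar0 n) -> F1 A = set0.
Proof.
move=> [x0xb _ _ seg]; apply/eqP/set0Pn => [[p]].
rewrite inE => /andP [pS /and3P [/negbTE p0 p1 _]].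
have mid : conv R [set x0 n; xbar0 n] (fun _ => 2^-1).
  apply/(conv_pairP _ x0xb); exists 2^-1 => [|c]; first by apply/andP; split; lra.
  by have := emb_ptC R (x0 n) c; rewrite -xbar0E; lra.
have pq_mid c : emb R p c + emb R (ptC p) c = 2 * 2^-1 by rewrite emb_ptC; lra.
have /(conv_pairP _ x0xb) [a _ pE] := face_midpoint seg pS (ptC_in_NPadj pS) pq_mid mid.
by have := pE (Yc n o0); have := pE (Yc n o1); rewrite /emb !ffunE p0 p1 /=; lra.
Qed.

Theorem mainTheorem5 (R : realFieldType) (m n : nat) (A : 'M[nat]_(m, n)) :
  (0 < m)%N -> (0 < n)%N ->
  (forall i j, A i j <= 1)%N ->
  (forall i, \sum_(j < n) A i j = 3)%N ->
  (adjacent R (NPadj A) (x0 n) (xbar0 n) <-> F1 A = set0) /\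
  (adjacent R (NPadj A) (x0 n) (xbar0 n) <-> Part A = set0).
Proof.
move=> m0 _ A01 A_row3; have F1_Part := F1_eq0_Part A01 A_row3.
have adj_Part : adjacent R (NPadj A) (x0 n) (xbar0 n) <-> Part A = set0.
  split=> [/adjacent_F1 /F1_Part // | /(NPadj_pair A01 A_row3 m0) ->].
  exact/adjacent_pair/x0_neq_xbar0.
by split=> //; apply: iff_trans adj_Part (iff_sym F1_Part).
Qed.
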